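(* Let $d=2\delta$ be even, $\mathcal{C}\in(\mathbb{R}^I)^{\otimes d}$ symmetric, $v\in\mathbb{R}^I$ nonzero and $\mathcal{M}=\{v^{\otimes(d-1)}\}$. Let $\mathcal{T}=\sum_{j=1}^r\lambda_jx_j^{\otimes d}$ ($\lambda_j\in\mathbb{R}$, $x_j\in\mathbb{R}^I$) be a tensor of minimal symmetric rank $r=\operatorname{minsrk}(\mathcal{C}\bmod\mathcal{M})$ in $\mathcal{C}\bmod\mathcal{M}$. If $x_1^{\otimes\delta},\dots,x_r^{\otimes\delta},v^{\otimes\delta}$ are linearly independent, then $\operatorname{srk}\operatorname{SAdj}(\mathcal{C},\mathcal{M})=r+d=\operatorname{minsrk}(\mathcal{C}\bmod\mathcal{M})+d\dim\operatorname{Span}\mathcal{M}$.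
   Context: All tensors are real; symmetric rank $\operatorname{srk}$ is the minimal number of summands $\lambda u^{\otimes d}$. Symmetric adjoining: $\mathcal{M}$ is indexed by a finite set $W$ disjoint from $I$ (here $|W|=1$); $\operatorname{SAdj}(\mathcal{C},\mathcal{M})\in(\mathbb{R}^{I\cup W})^{\otimes d}$ has entries $\mathcal{C}(k_1|\dots|k_d)$ when all $k_i\in I$, entries $\mathcal{M}^{(w)}(k_1|\dots|\widehat{k_j}|\dots|k_d)$ when exactly the $j$th index equals $w\in W$ and the others lie in $I$, and $0$ otherwise. $\mathcal{C}\bmod\mathcal{M}$ is the set of tensors with entries $\mathcal{C}(k_1|\dots|k_d)+\sum_{j=1}^d M_j^{(k_j)}(k_1|\dots|\widehat{k_j}|\dots|k_d)$ with arbitrary $M_j^{(k_j)}\in\operatorname{Span}\mathcal{M}$ chosen independently for each $j$ and each $k_j\in I$. $\operatorname{minsrk}\mathcal{A}$ is the minimal symmetric rank of a symmetric tensor in $\mathcal{A}$. *)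

From HB Require Import structures.
From mathcomp Require Import all_boot all_order all_fingroup all_algebra.
From mathcomp Require Import reals.
Set Implicit Arguments. Unset Strict Implicit. Unset Printing Implicit Defensive.
Import Order.TTheory GRing.Theory Num.Theory.
Local Open Scope ring_scope.

Definition tensor (R : realType) (T : finType) (n : nat) := ('I_n -> T) -> R.

Definition tpow (R : realType) (T : finType) (u : T -> R) (n : nat) : tensor R T n :=
  fun k => \prod_(i < n) u (k i).
Arguments tpow {R T} u n _.

Definition sym_tensor (R : realType) (T : finType) (n : nat) (X : tensor R T n) : Prop :=
  forall (s : 'S_n) (k : 'I_n -> T), X (fun i => k (s i)) = X k.

Definition has_sdecomp (R : realType) (T : finType) (n : nat) (X : tensor R T n)
  (r : nat) : Prop :=
  exists (lam : 'I_r -> R) (u : 'I_r -> T -> R),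
    forall k, X k = \sum_(j < r) lam j * tpow (u j) n k.

Definition is_srk (R : realType) (T : finType) (n : nat) (X : tensor R T n)
  (r : nat) : Prop :=
  has_sdecomp X r /\ forall s, has_sdecomp X s -> (r <= s)%N.

Definition is_minsrk (R : realType) (T : finType) (n : nat)
  (A : tensor R T n -> Prop) (r : nat) : Prop :=
  (exists X, A X /\ sym_tensor X /\ is_srk X r) /\
  (forall X, A X -> sym_tensor X -> forall s, has_sdecomp X s -> (r <= s)%N).

Lemma skip_lt (d : nat) (j : 'I_d) (i : 'I_d.-1) : (bump j i < d)%N.
Proof.
case: d j i => [[]//|d] j i /=.
rewrite /bump; case: (j <= i)%N => /=; rewrite ?add1n ?add0n //.
exact: (ltn_ord i).
exact: (leq_trans (ltn_ord i)).
Qed.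

Definition skip (d : nat) (j : 'I_d) (i : 'I_d.-1) : 'I_d := Ordinal (skip_lt j i).

Definition delete_at (T : Type) (d : nat) (k : 'I_d -> T) (j : 'I_d) : 'I_d.-1 -> T :=
  fun i => k (skip j i).

(* C mod M for M = {m} (a single tensor of order d-1): the tensors with entries
   C(k) + sum_j M_j^{(k_j)}(k with j-th index deleted), M_j^{(a)} = c j a * m
   ranging over Span M independently for each j and a. *)
Definition Cmod (R : realType) (I : finType) (d : nat) (C : tensor R I d)
  (m : tensor R I d.-1) : tensor R I d -> Prop :=
  fun X => exists c : 'I_d -> I -> R,
    forall k, X k = C k + \sum_(j < d) c j (k j) * m (delete_at k j).

(* A = SAdj(C, {m}) with W = {w} realised as None in option I. *)
Definition is_SAdj (R : realType) (I : finType) (d : nat) (C : tensor R I d)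
  (m : tensor R I d.-1) (A : tensor R (option I) d) : Prop :=
  [/\ forall k : 'I_d -> I, A (fun i => Some (k i)) = C k,
      forall (j : 'I_d) (k : 'I_d -> I),
        A (fun i => if i == j then None else Some (k i)) = m (delete_at k j)
    & forall k : 'I_d -> option I,
        (1 < #|[set i | k i == None]|)%N -> A k = 0].

From HB Require Import structures.
From mathcomp Require Import all_boot all_order all_fingroup all_algebra.
From mathcomp Require Import reals.
From mathcomp Require Import ring.
From Stdlib Require Import FunctionalExtensionality.
Import Order.TTheory GRing.Theory Num.Theory.
Local Open Scope ring_scope.
Set Implicit Arguments. Unset Strict Implicit. Unset Printing Implicit Defensive.

(* Write d = 2 dl and let w be the adjoined index.

   Upper bound: averaging the correction over rotations of the indices puts C into the form
   C = T + sum_l u(k_l) v^(d-1)(k without l).  Then SAdj(C, M) is sum_j lam_j (x_j, 0)^(x)d plus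
   the coefficient of tau in the product of the linear pencils (v + tau u, tau).  Taking that
   coefficient is a linear functional on polynomials of degree <= d, and the quadrature rule
   with the 2 dl symmetric nodes +-1, ..., +-dl computes it exactly, because the node
   polynomial is even.  Each node contributes one symmetric rank-one term: r + d terms.

   Lower bound: in a decomposition sum_i lam'_i y_i^(x)d of SAdj(C, M), the entries with
   n copies of a fixed e (v e <> 0) and d - n copies of w are moments forcing at least d
   summands with y_i(w) <> 0.  Subtracting from the other coordinates suitable multiples of
   y_i(w), factor by factor, kills d of them and leaves a non-symmetric decomposition with
   s - d terms of an element of C mod M.  Flattening into dl + dl indices and applying the
   functionals dual to the independent x_j^(x)dl, v^(x)dl turns T into diag(lam), whose rank
   is r because minimality of r forces every lam_j <> 0.  Hence r <= s - d. *)

(** * Polynomials *)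

Lemma coef1M (R : comNzRingType) (p q : {poly R}) :
  (p * q)`_1 = p`_0 * q`_1 + p`_1 * q`_0.
Proof. by rewrite coefM big_ord_recr big_ord1. Qed.

Lemma coef1_prod (R : comNzRingType) (n : nat) (F : 'I_n -> {poly R}) :
  (\prod_(t < n) F t)`_1 = \sum_(j < n) (F j)`_1 * \prod_(t < n | t != j) (F t)`_0.
Proof.
elim: n F => [|n IH] F; first by rewrite big_ord0 big_ord0 coefC.
rewrite big_ord_recr coef1M IH coef0_prod big_ord_recr /= big_distrl /= addrC.
have max_neq (i : 'I_n) : (ord_max != widen_ord (leqnSn n) i).
  by rewrite -val_eqE /= neq_ltn ltn_ord orbT.
congr (_ + _).
  rewrite [in RHS]big_mkcond big_ord_recr /= eqxx mulr1 mulrC; congr (_ * _).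
  by apply: eq_bigr => i _; rewrite eq_sym max_neq.
apply: eq_bigr => i _; rewrite [in RHS]big_mkcond big_ord_recr /= max_neq mulrA.
congr (_ * _ * _); rewrite big_mkcond; apply: eq_bigr => t _.
by rewrite -!val_eqE.
Qed.

Lemma sum_coef_delta (R : nzRingType) (n j : nat) (p : {poly R}) :
  (size p <= n)%N -> \sum_(m < n) p`_m * (m == j :> nat)%:R = p`_j.
Proof.
move=> sp; case: (ltnP j n) => [jn | nj].
  rewrite (bigD1 (Ordinal jn)) //= eqxx mulr1 big1 ?addr0 // => m mj.
  by rewrite -val_eqE /= in mj; rewrite (negbTE mj) mulr0.
rewrite big1 ?(leq_sizeP _ _ (leq_trans sp nj)) // => m _.
by rewrite (ltn_eqF (leq_trans (ltn_ord m) nj)) mulr0.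
Qed.

Lemma coef_eval_weights (F : fieldType) (n : nat) (t : 'I_n -> F) :
  injective t -> forall j : nat, exists mu : 'I_n -> F, forall p : {poly F},
    (size p <= n)%N -> \sum_(i < n) mu i * p.[t i] = p`_j.
Proof.
move=> t_inj j; pose V := Vandermonde n (\row_i t i).
have V_unit : V \in unitmx.
  rewrite unitmxE det_Vandermonde unitfE; apply/prodf_neq0 => i _.
  apply/prodf_neq0 => k ik; rewrite !mxE subr_eq0; apply/eqP => /t_inj ki.
  by move: ik; rewrite ki ltnn.
pose delta := \col_(m < n) (m == j :> nat)%:R : 'cV[F]_n.
pose mu := invmx V *m delta.
have Vmu (m : 'I_n) : \sum_(i < n) t i ^+ m * mu i 0 = (m == j :> nat)%:R.
  have := congr1 (fun M : 'cV_n => M m 0) (mulKVmx V_unit delta).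
  by rewrite !mxE => <-; apply: eq_bigr => i _; rewrite !mxE.
exists (fun i => mu i 0) => p sp; rewrite -(sum_coef_delta j sp).
under eq_bigr => i _ do rewrite (horner_coef_wide _ sp) big_distrr /=.
rewrite exchange_big; apply: eq_bigr => m _; rewrite -Vmu big_distrr /=.
by apply: eq_bigr => i _; rewrite mulrCA (mulrC (mu i 0)).
Qed.

Lemma split_lshift (m n : nat) (j : 'I_m) : split (lshift n j) = inl j.
Proof. exact: (unsplitK (inl _ j)). Qed.

Lemma split_rshift (m n : nat) (j : 'I_n) : split (rshift m j) = inr j.
Proof. exact: (unsplitK (inr _ j)). Qed.

Definition sym_node (R : numDomainType) (dl : nat) (i : 'I_(dl + dl)) : R :=
  match split i with inl j => j.+1%:R | inr j => - j.+1%:R end.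

Lemma sym_node_inj (R : numDomainType) (dl : nat) : injective (@sym_node R dl).
Proof.
have pos_neq_neg (a b : nat) : a.+1%:R != - b.+1%:R :> R.
  by rewrite -subr_eq0 opprK -natrD pnatr_eq0.
move=> i i'; rewrite /sym_node -(splitK i) -(splitK i').
case: (split i) => j; case: (split i') => j' /=; rewrite ?split_lshift ?split_rshift.
- by move/eqP; rewrite eqr_nat eqSS => /eqP/val_inj ->.
- by move/eqP; rewrite (negbTE (pos_neq_neg _ _)).
- by move/esym/eqP; rewrite (negbTE (pos_neq_neg _ _)).
- by move/eqP; rewrite eqr_opp eqr_nat eqSS => /eqP/val_inj ->.
Qed.

Lemma coef1_sym_node_poly (R : numDomainType) (dl : nat) :
  (\prod_(i < dl + dl) ('X - (@sym_node R dl i)%:P))`_1 = 0.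
Proof.
rewrite big_split_ord /= -big_split /= coef1_prod big1 // => j _.
rewrite /sym_node split_lshift split_rshift coef1M !coefB !coefX !coefC /=.
by rewrite !subr0 !sub0r opprK mulr1 mul1r addrC subrr mul0r.
Qed.

Lemma coef1_quadrature (R : numFieldType) (dl : nat) :
  exists mu t : 'I_(dl + dl) -> R, forall p : {poly R},
    (size p <= (dl + dl).+1)%N -> \sum_(i < dl + dl) mu i * p.[t i] = p`_1.
Proof.
set n := (dl + dl)%N; set t := @sym_node R dl.
have [mu Hmu] := coef_eval_weights (@sym_node_inj R dl) 1.
exists mu, t => p sp.
set q := \prod_(i < n) ('X - (t i)%:P).
have size_q : size q = n.+1 by rewrite size_prod_XsubC /index_enum unlock -enumT -cardE card_ord.
have lead_q : q`_n = 1.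
  by have /monicP := monic_prod_XsubC (index_enum 'I_n) xpredT t; rewrite /lead_coef size_q.
have q_t i : q.[t i] = 0 by rewrite horner_prod (bigD1 i) //= hornerXsubC subrr mul0r.
set p' := p - p`_n *: q.
have size_p' : (size p' <= n)%N.
  apply/leq_sizeP => m; rewrite leq_eqVlt => /predU1P [<-|nm].
    by rewrite coefB coefZ lead_q mulr1 subrr.
  have pm : p`_m = 0 by apply: (leq_sizeP _ _ sp).
  have qm : q`_m = 0 by apply: (leq_sizeP _ _ (eq_leq size_q)).
  by rewrite coefB coefZ pm qm mulr0 subr0.
have -> : p`_1 = p'`_1 by rewrite coefB coefZ coef1_sym_node_poly mulr0 subr0.
rewrite -(Hmu _ size_p'); apply: eq_bigr => i _.
by rewrite hornerD hornerN hornerZ q_t mulr0 subr0.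
Qed.

Lemma card_support_ge_of_moments (F : fieldType) (s d : nat) (w a b : 'I_s -> F) (z : F) :
  z != 0 ->
  (forall n, (n < d)%N ->
     \sum_(i < s) w i * (a i ^+ n * b i ^+ (d - n)) = if n == d.-1 then z else 0) ->
  (d <= #|[set i | b i != 0%R]|)%N.
Proof.
move=> z_neq0 Hmom; set S := [set i | b i != 0].
rewrite leqNgt; apply/negP => Sd.
have d_gt0 : (0 < d)%N := leq_ltn_trans (leq0n _) Sd.
have S_le : (#|S| <= d.-1)%N by rewrite -ltnS prednK.
pose c i := a i / b i.
pose p := \prod_(i <- enum S) ('X - (c i)%:P).
have size_p : size p = #|S|.+1 by rewrite size_prod_XsubC -cardE.
have lead_p : p`_#|S| = 1.
  by have /monicP := monic_prod_XsubC (enum S) xpredT c; rewrite /lead_coef size_p.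
pose q := p * 'X^(d.-1 - #|S|).
have size_q : size q = d.
  by rewrite size_mulXn ?monic_neq0 ?monic_prod_XsubC // size_p addnS subnK ?prednK.
have lead_q : q`_d.-1 = 1 by rewrite coefMXn ltnNge leq_subr /= subKn.
have q_c i : i \in S -> q.[c i] = 0.
  move=> iS; rewrite hornerM horner_prod (big_rem i) ?mem_enum //=.
  by rewrite hornerXsubC subrr !mul0r.
suff : \sum_(i in S) w i * b i ^+ d * q.[c i] = z.
  by rewrite big1 => [/esym/eqP|i /q_c ->]; rewrite ?(negbTE z_neq0) ?mulr0.
have term i : i \in S ->
    w i * b i ^+ d * q.[c i] = \sum_(m < d) q`_m * (w i * (a i ^+ m * b i ^+ (d - m))).
  rewrite inE => bi_neq0; rewrite (horner_coef_wide _ (eq_leq size_q)) mulr_sumr.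
  apply: eq_bigr => m _.
  have -> : b i ^+ d = b i ^+ m * b i ^+ (d - m) by rewrite -exprD subnKC // ltnW.
  by rewrite /c expr_div_n; field; rewrite expf_neq0.
have off i : i \notin S -> \sum_(m < d) q`_m * (w i * (a i ^+ m * b i ^+ (d - m))) = 0.
  rewrite inE negbK => /eqP ->; apply: big1 => m _.
  by rewrite expr0n subn_eq0 leqNgt ltn_ord !mulr0.
transitivity (\sum_(i < s) \sum_(m < d) q`_m * (w i * (a i ^+ m * b i ^+ (d - m)))).
  rewrite [RHS](bigID (mem S)) /= [X in _ = _ + X]big1 ?addr0 => [|i /off //].
  exact: eq_bigr.
have d1d : (d.-1 < d)%N by rewrite prednK.
rewrite exchange_big (bigD1 (Ordinal d1d)) //= -mulr_sumr Hmom // eqxx lead_q mul1r.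
rewrite big1 ?addr0 // => m; rewrite -val_eqE /= => m_neq.
by rewrite -mulr_sumr Hmom // (negbTE m_neq) mulr0.
Qed.

(** * Linear algebra *)

Lemma dual_basis (F : fieldType) (K : finType) (r : nat) (f : 'I_r -> K -> F) (g : K -> F) :
  (forall (a : 'I_r -> F) b, (forall c, \sum_(j < r) a j * f j c + b * g c = 0) ->
     (forall j, a j = 0) /\ b = 0) ->
  exists phi : 'I_r -> K -> F,
    (forall a j, \sum_(c : K) phi a c * f j c = (a == j)%:R) /\
    (forall a, \sum_(c : K) phi a c * g c = 0).
Proof.
move=> indep.
pose row_of (i : 'I_(r + 1)) : K -> F := match split i with inl j => f j | inr _ => g end.
pose B : 'M[F]_(r + 1, #|K|) := \matrix_(i, c) row_of i (enum_val c).
have B_free : row_free B.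
  apply: inj_row_free => w /rowP wB.
  have [w_f w_g] : (forall j, w 0 (lshift 1 j) = 0) /\ w 0 (rshift r ord0) = 0.
    apply: indep => c; have := wB (enum_rank c); rewrite !mxE big_split_ord big_ord1 /=.
    rewrite !mxE /row_of split_rshift enum_rankK.
    by under eq_bigr do rewrite /B mxE /row_of split_lshift enum_rankK.
  by apply/rowP => i; rewrite mxE -(splitK i); case: (split i) => j; rewrite ?w_f // ord1.
have [B' BB'] := row_freeP B_free.
have sum_K (i : 'I_(r + 1)) a : \sum_(c : K) B' (enum_rank c) (lshift 1 a) * row_of i c =
    (i == lshift 1 a)%:R.
  have := congr1 (fun M : 'M_(r + 1) => M i (lshift 1 a)) BB'; rewrite !mxE => <-.
  rewrite (reindex _ (onW_bij _ (@enum_val_bij K))).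
  by apply: eq_bigr => c _; rewrite mxE enum_valK mulrC.
exists (fun a c => B' (enum_rank c) (lshift 1 a)); split => [a j|a].
  by have := sum_K (lshift 1 j) a; rewrite /row_of split_lshift (inj_eq (@lshift_inj _ _)) eq_sym.
have := sum_K (rshift r ord0) a; rewrite /row_of split_rshift => ->.
by rewrite -val_eqE /= gtn_eqF ?ltn_addr.
Qed.

Lemma leq_card_of_diag_sum (F : fieldType) (r s : nat) (lam : 'I_r -> F) (P : pred 'I_s)
    (U V : 'I_s -> 'I_r -> F) :
  (forall j, lam j != 0) ->
  (forall a b, (a == b)%:R * lam a = \sum_(i | P i) U i a * V i b) ->
  (r <= #|P|)%N.
Proof.
move=> lam_neq0 H.
have diag_sum : diag_mx (\row_j lam j) = \sum_(i | P i) (\col_a U i a *m \row_b V i b).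
  apply/matrixP => a b; rewrite !mxE summxE -mulr_natl H; apply: eq_bigr => i _.
  by rewrite !mxE big_ord1 !mxE.
have <- : \rank (diag_mx (\row_j lam j)) = r.
  apply: mxrank_unit; rewrite unitmxE det_diag unitfE.
  by apply/prodf_neq0 => j _; rewrite mxE.
rewrite diag_sum -sum1_card.
elim/big_rec2: _ => [|i M m _ IH]; first by rewrite mxrank0.
rewrite (leq_trans (mxrank_add _ _)) // leq_add //.
by rewrite (leq_trans (mxrankM_maxl _ _)) ?rank_leq_col.
Qed.

Lemma dsum_factor (R : comNzRingType) (K : finType) (p q F G : K -> R) :
  \sum_(c1 : K) \sum_(c2 : K) p c1 * q c2 * (F c1 * G c2) =
  (\sum_(c1 : K) p c1 * F c1) * (\sum_(c2 : K) q c2 * G c2).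
Proof.
rewrite mulr_suml; apply: eq_bigr => c1 _; rewrite mulr_sumr.
by apply: eq_bigr => c2 _; rewrite mulrACA.
Qed.

Lemma dual_basis_coef (F : fieldType) (K : finType) (r : nat) (f : 'I_r -> K -> F)
    (g : K -> F) (phi : 'I_r -> K -> F) :
  (forall a j, \sum_(c : K) phi a c * f j c = (a == j)%:R) ->
  (forall a, \sum_(c : K) phi a c * g c = 0) ->
  forall a (coef : 'I_r -> F) (y : F) (Z : K -> F),
  \sum_(c : K) phi a c * (\sum_(j < r) coef j * f j c + y * g c + Z c) =
  coef a + \sum_(c : K) phi a c * Z c.
Proof.
move=> phi_f phi_g a coef y Z; under eq_bigr do rewrite !mulrDr mulr_sumr.
have coef_j j : \sum_c phi a c * (coef j * f j c) = coef j * (a == j)%:R.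
  by rewrite -phi_f mulr_sumr; apply: eq_bigr => c _; rewrite mulrCA.
have g_y : \sum_c phi a c * (y * g c) = y * \sum_c phi a c * g c.
  by rewrite mulr_sumr; apply: eq_bigr => c _; rewrite mulrCA.
rewrite !big_split /= exchange_big /= g_y phi_g mulr0 addr0; congr (_ + _).
under eq_bigr do rewrite coef_j.
rewrite (bigD1 a) //= eqxx mulr1 big1 ?addr0 // => j ja.
by rewrite eq_sym (negbTE ja) mulr0.
Qed.

Lemma flattening_rank_bound (F : fieldType) (K : finType) (r s : nat) (lam : 'I_r -> F)
    (f : 'I_r -> K -> F) (g alpha beta : K -> F) (P : pred 'I_s) (U W : 'I_s -> K -> F) :
  (forall j, lam j != 0) ->
  (forall (a : 'I_r -> F) b, (forall c, \sum_(j < r) a j * f j c + b * g c = 0) ->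
     (forall j, a j = 0) /\ b = 0) ->
  (forall c1 c2, \sum_(i | P i) U i c1 * W i c2 =
     \sum_(j < r) lam j * (f j c1 * f j c2) + (alpha c1 * g c2 + g c1 * beta c2)) ->
  (r <= #|P|)%N.
Proof.
move=> lam_neq0 indep flat.
have [phi [phi_f phi_g]] := dual_basis indep.
pose phi_beta b := \sum_c phi b c * beta c.
have contract_right b c1 :
    \sum_c2 phi b c2 * \sum_(i | P i) U i c1 * W i c2 = lam b * f b c1 + g c1 * phi_beta b.
  under eq_bigr do rewrite flat addrA (eq_bigr _ (fun j _ => mulrA _ _ _)).
  rewrite (dual_basis_coef phi_f phi_g) /phi_beta mulr_sumr; congr (_ + _).
  by apply: eq_bigr => c2 _; rewrite mulrCA.
apply: (leq_card_of_diag_sum (U := fun i a => \sum_c phi a c * U i c)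
                              (V := fun i b => \sum_c phi b c * W i c) lam_neq0) => a b.
transitivity (\sum_c1 phi a c1 * \sum_c2 phi b c2 * \sum_(i | P i) U i c1 * W i c2).
  under eq_bigr do rewrite contract_right mulrDr.
  rewrite big_split /= (eq_bigr (fun c => lam b * (phi a c * f b c))) => [|c _]; last first.
    by rewrite mulrCA.
  rewrite [X in _ + X](eq_bigr (fun c => phi_beta b * (phi a c * g c))) => [|c _]; last first.
    by rewrite [g c * _]mulrC mulrCA.
  rewrite -!mulr_sumr phi_f phi_g mulr0 addr0.
  by case: eqP => [->|]; rewrite ?mulr0 ?mul0r // mulr1 mul1r.
rewrite [RHS](eq_bigr (fun i => \sum_c1 \sum_c2 phi a c1 * phi b c2 * (U i c1 * W i c2)));
  last by move=> i _; rewrite dsum_factor.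
rewrite [RHS]exchange_big; apply: eq_bigr => c1 _; rewrite [RHS]exchange_big mulr_sumr.
apply: eq_bigr => c2 _; rewrite !mulr_sumr; apply: eq_bigr => i _.
by rewrite mulrA.
Qed.

Lemma sum_subsets_card_le1 (V : nmodType) (T : finType) (Phi : {set T} -> V) :
  (forall J : {set T}, (1 < #|J|)%N -> Phi J = 0) ->
  \sum_(J : {set T}) Phi J = Phi set0 + \sum_(t : T) Phi [set t].
Proof.
move=> Phi0; rewrite (bigID (fun J : {set T} => #|J| <= 1)%N) /=.
rewrite [X in _ + X]big1 ?addr0 => [|J]; last by rewrite -ltnNge; apply: Phi0.
rewrite (bigD1 set0) ?cards0 //= -big_cards1; congr (_ + _); apply: eq_bigl => J.
by rewrite -cards_eq0; case: #|J| => [|[]].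
Qed.

(** * Symmetric tensors *)

Definition tpow_skip (R : comNzRingType) (I : finType) (d : nat) (v : I -> R)
    (k : 'I_d -> I) (j : 'I_d) : R :=
  \prod_(t < d | t != j) v (k t).

Lemma tpow_delete_at (R : realType) (I : finType) (d : nat) (v : I -> R)
    (k : 'I_d -> I) (j : 'I_d) :
  tpow v d.-1 (delete_at k j) = tpow_skip v k j.
Proof.
case: d => [|d] in k j *; first by case: j.
rewrite /tpow_skip big_mkcond (bigD1_ord j) //= eqxx mul1r.
apply: eq_bigr => i _; rewrite eq_sym neq_lift; congr (v (k _)); exact: val_inj.
Qed.

Lemma tpow_perm (R : realType) (I : finType) (n : nat) (u : I -> R) (s : 'S_n)
    (k : 'I_n -> I) :
  tpow u n (fun i => k (s i)) = tpow u n k.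
Proof. by rewrite /tpow [RHS](reindex_inj (@perm_inj _ s)). Qed.

Lemma tpow_skip_perm (R : comNzRingType) (I : finType) (d : nat) (v : I -> R)
    (k : 'I_d -> I) (j : 'I_d) (s : 'S_d) :
  tpow_skip v (fun t => k (s t)) j = tpow_skip v k (s j).
Proof.
rewrite /tpow_skip [RHS](reindex_inj (@perm_inj _ s)) /=.
by apply: eq_bigl => t; rewrite (inj_eq (@perm_inj _ s)).
Qed.

Lemma tpow_eq0 (R : realType) (I : finType) (n : nat) (u : I -> R) (k : 'I_n -> I)
    (t : 'I_n) :
  u (k t) = 0 -> tpow u n k = 0.
Proof. by move=> ukt; rewrite /tpow (bigD1 t) //= ukt mul0r. Qed.

Lemma sym_tensor_sdecomp (R : realType) (I : finType) (n r : nat) (lam : 'I_r -> R)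
    (x : 'I_r -> I -> R) :
  sym_tensor (fun k : 'I_n -> I => \sum_(j < r) lam j * tpow (x j) n k).
Proof. by move=> s k; apply: eq_bigr => j _; rewrite tpow_perm. Qed.

Definition rot (d : nat) (m t : 'I_d) : 'I_d :=
  Ordinal (ltn_pmod (t + m) (leq_ltn_trans (leq0n _) (ltn_ord m))).

Lemma rot_inj (d : nat) (m : 'I_d) : injective (rot m).
Proof.
move=> t t' /(congr1 val) /= /eqP; rewrite -!(addnC m) eqn_modDl !modn_small //.
by move/eqP/val_inj.
Qed.

Lemma rot_inj_shift (d : nat) (t : 'I_d) : injective (fun m => rot m t).
Proof.
move=> m m' /(congr1 val) /= /eqP; rewrite eqn_modDl !modn_small //.
by move/eqP/val_inj.
Qed.

(* Averaging over the d cyclic rotations of the indices. *)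
Lemma sym_tensor_skip_average (R : realType) (I : finType) (d : nat) (v : I -> R)
    (c : 'I_d -> I -> R) (G : tensor R I d) :
  sym_tensor G -> (forall k, G k = \sum_(j < d) c j (k j) * tpow_skip v k j) ->
  forall k, G k = \sum_(l < d) (d%:R^-1 * \sum_(j < d) c j (k l)) * tpow_skip v k l.
Proof.
case: d c G => [|n] c G symG HG k; first by rewrite HG !big_ord0.
have n1_neq0 : n.+1%:R != 0 :> R by rewrite pnatr_eq0.
apply: (mulfI n1_neq0); rewrite big_distrr /=.
have -> : n.+1%:R * G k = \sum_(m < n.+1) G (fun t => k (perm (@rot_inj n.+1 m) t)).
  by rewrite (eq_bigr (fun _ => G k)) ?sumr_const ?card_ord ?mulr_natl // => m _.
transitivity (\sum_(m < n.+1) \sum_(j < n.+1) c j (k (rot m j)) * tpow_skip v k (rot m j)).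
  by apply: eq_bigr => m _; rewrite HG; apply: eq_bigr => j _; rewrite tpow_skip_perm !permE.
rewrite exchange_big [RHS](eq_bigr (fun l => \sum_(j < n.+1) c j (k l) * tpow_skip v k l)).
  rewrite [RHS]exchange_big; apply: eq_bigr => j _.
  by rewrite [RHS](reindex_inj (@rot_inj_shift n.+1 j)).
by move=> l _; rewrite mulrA mulrA mulfV // mul1r big_distrl.
Qed.

Lemma Cmod_sym_normal_form (R : realType) (I : finType) (d : nat) (C T : tensor R I d)
    (v : I -> R) :
  sym_tensor C -> sym_tensor T -> Cmod C (tpow v d.-1) T ->
  exists u : I -> R, forall k, C k = T k + \sum_(l < d) u (k l) * tpow_skip v k l.
Proof.
move=> symC symT [c HT].
have symTC : sym_tensor (fun k => T k - C k) by move=> s k; rewrite symT symC.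
have := @sym_tensor_skip_average R I d v c _ symTC.
have HTC k : T k - C k = \sum_(j < d) c j (k j) * tpow_skip v k j.
  by rewrite HT addrAC subrr add0r; apply: eq_bigr => j _; rewrite tpow_delete_at.
move=> /(_ HTC) avg; exists (fun a => - (d%:R^-1 * \sum_(j < d) c j a)) => k.
by rewrite -[C k](subKr (T k)) avg -sumrN; congr (_ + _); apply: eq_bigr => l _; rewrite mulNr.
Qed.

Definition tcat (I : Type) (m n : nat) (k1 : 'I_m -> I) (k2 : 'I_n -> I)
    (t : 'I_(m + n)) : I :=
  match split t with inl s => k1 s | inr s => k2 s end.

Lemma tcat_lshift (I : Type) (m n : nat) (k1 : 'I_m -> I) (k2 : 'I_n -> I) (s : 'I_m) :
  tcat k1 k2 (lshift n s) = k1 s.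
Proof. by rewrite /tcat split_lshift. Qed.

Lemma tcat_rshift (I : Type) (m n : nat) (k1 : 'I_m -> I) (k2 : 'I_n -> I) (s : 'I_n) :
  tcat k1 k2 (rshift m s) = k2 s.
Proof. by rewrite /tcat split_rshift. Qed.

Lemma tpow_tcat (R : realType) (I : finType) (m n : nat) (u : I -> R)
    (k1 : 'I_m -> I) (k2 : 'I_n -> I) :
  tpow u (m + n) (tcat k1 k2) = tpow u m k1 * tpow u n k2.
Proof.
rewrite /tpow big_split_ord.
by congr (_ * _); apply: eq_bigr => t _; rewrite ?tcat_lshift ?tcat_rshift.
Qed.

Lemma tpow_skip_tcat_lshift (R : realType) (I : finType) (m n : nat) (v : I -> R)
    (k1 : 'I_m -> I) (k2 : 'I_n -> I) (s : 'I_m) :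
  tpow_skip v (tcat k1 k2) (lshift n s) = tpow_skip v k1 s * tpow v n k2.
Proof.
rewrite /tpow_skip big_split_ord; congr (_ * _).
  by apply: eq_big => [t|t _]; rewrite ?(inj_eq (@lshift_inj _ _)) ?tcat_lshift.
apply: eq_big => [t|t _]; last by rewrite tcat_rshift.
by rewrite -val_eqE /= gtn_eqF ?ltn_addr.
Qed.

Lemma tpow_skip_tcat_rshift (R : realType) (I : finType) (m n : nat) (v : I -> R)
    (k1 : 'I_m -> I) (k2 : 'I_n -> I) (s : 'I_n) :
  tpow_skip v (tcat k1 k2) (rshift m s) = tpow v m k1 * tpow_skip v k2 s.
Proof.
rewrite /tpow_skip big_split_ord; congr (_ * _).
  apply: eq_big => [t|t _]; last by rewrite tcat_lshift.
  by rewrite -val_eqE /= ltn_eqF ?ltn_addr.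
by apply: eq_big => [t|t _]; rewrite ?(inj_eq (@rshift_inj _ _)) ?tcat_rshift.
Qed.

(** * The upper bound *)

Definition oext (R : Type) (I : Type) (f : I -> R) (z : R) (o : option I) : R :=
  if o is Some a then f a else z.

(* The vector (v + tau u, tau) on option I, as a polynomial in tau; None is the adjoined
   index w. *)
Definition pencil_poly (R : nzRingType) (I : Type) (v u : I -> R) (o : option I) :
    {poly R} :=
  if o is Some a then (v a)%:P + u a *: 'X else 'X.

Lemma horner_pencil_poly (R : comNzRingType) (I : Type) (v u : I -> R) (o : option I)
    (s : R) :
  (pencil_poly v u o).[s] = oext (fun a => v a + s * u a) s o.
Proof. by case: o => [a|] /=; rewrite ?hornerD ?hornerC ?hornerZ hornerX // mulrC. Qed.

Lemma coef0_pencil_poly (R : nzRingType) (I : Type) (v u : I -> R) (o : option I) :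
  (pencil_poly v u o)`_0 = oext v 0 o.
Proof. by case: o => [a|] /=; rewrite ?coefD ?coefC ?coefZ coefX ?mulr0 ?addr0. Qed.

Lemma coef1_pencil_poly (R : nzRingType) (I : Type) (v u : I -> R) (o : option I) :
  (pencil_poly v u o)`_1 = oext u 1 o.
Proof. by case: o => [a|] /=; rewrite ?coefD ?coefC ?coefZ coefX ?mulr1 ?add0r. Qed.

Lemma size_pencil_poly (R : nzRingType) (I : Type) (v u : I -> R) (o : option I) :
  (size (pencil_poly v u o) <= 2)%N.
Proof.
case: o => [a|] /=; last by rewrite size_polyX.
rewrite (leq_trans (size_polyD _ _)) // geq_max (leq_trans (size_polyC_leq1 _)) //=.
by rewrite (leq_trans (size_scale_leq _ _)) ?size_polyX.
Qed.

Lemma size_prod_pencil_poly (R : nzRingType) (I : Type) (n : nat) (v u : I -> R)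
    (k : 'I_n -> option I) :
  (size (\prod_(t < n) pencil_poly v u (k t))%R <= n.+1)%N.
Proof.
elim: n k => [|n IH] k; first by rewrite big_ord0 size_poly1.
rewrite big_ord_recr /= (leq_trans (size_polyMleq _ _)) //.
by rewrite -subn1 leq_subLR add1n -addn2 leq_add ?size_pencil_poly.
Qed.

(* [e] only serves as a default element of [I]. *)
Lemma is_SAdj_unique (R : realType) (I : finType) (d : nat) (e : I) (C : tensor R I d)
    (m : tensor R I d.-1) (A B : tensor R (option I) d) :
  is_SAdj C m A -> is_SAdj C m B -> A = B.
Proof.
move=> [A1 A2 A3] [B1 B2 B3]; apply: functional_extensionality => k.
set N := [set t | k t == None].
have [N_gt1 | N_le1] := ltnP 1 #|N|; first by rewrite A3 ?B3.
pose k' t := odflt e (k t).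
have [/cards1P [j Nj] | N_ne1] := boolP (#|N| == 1%N).
  have -> : k = fun t => if t == j then None else Some (k' t).
    apply: functional_extensionality => t; rewrite /k' -in_set1 -Nj inE.
    by case: (k t).
  by rewrite A2 B2.
have N0 : N = set0 by apply/cards0_eq; move: N_le1 N_ne1; case: #|N| => [|[]].
have -> : k = fun t => Some (k' t).
  apply: functional_extensionality => t; have := in_set0 t; rewrite -N0 inE /k'.
  by case: (k t).
by rewrite A1 B1.
Qed.

Lemma coef1_prod_pencil_poly (R : comNzRingType) (I : Type) (n : nat) (v u : I -> R)
    (k : 'I_n -> option I) :
  (\prod_(t < n) pencil_poly v u (k t))`_1 =
  \sum_(j < n) oext u 1 (k j) * \prod_(t < n | t != j) oext v 0 (k t).
Proof.
by rewrite coef1_prod; apply: eq_bigr => j _; rewrite coef1_pencil_poly;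
  under eq_bigr do rewrite coef0_pencil_poly.
Qed.

Lemma is_SAdj_pencil (R : realType) (I : finType) (d r : nat) (C : tensor R I d)
    (lam : 'I_r -> R) (x : 'I_r -> I -> R) (v u : I -> R) :
  (forall k, C k = \sum_(j < r) lam j * tpow (x j) d k
                   + \sum_(l < d) u (k l) * tpow_skip v k l) ->
  is_SAdj C (tpow v d.-1) (fun k => \sum_(j < r) lam j * tpow (oext (x j) 0) d k
                                    + (\prod_(t < d) pencil_poly v u (k t))`_1).
Proof.
move=> HC; split.
- by move=> k; rewrite HC coef1_prod_pencil_poly.
- move=> j k; rewrite big1 ?add0r; last by move=> l _; rewrite (tpow_eq0 (t := j)) ?eqxx ?mulr0.
  rewrite coef1_prod_pencil_poly (bigD1 j) //= eqxx mul1r [X in _ + X]big1 ?addr0.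
    by rewrite tpow_delete_at; apply: eq_bigr => t tj; rewrite (negbTE tj).
  by move=> l lj; rewrite (bigD1 j) 1?eq_sym //= eqxx mul0r mulr0.
- move=> k /card_gt1P [t1 [t2 [+ + t12]]]; rewrite !inE => /eqP kt1 /eqP kt2.
  rewrite big1 ?add0r; last by move=> l _; rewrite (tpow_eq0 (t := t1)) ?kt1 ?mulr0.
  rewrite coef1_prod_pencil_poly big1 // => j _.
  have [t [tj kt]] : exists t, t != j /\ k t = None.
    by case: (eqVneq t1 j) => [<-|]; [exists t2; rewrite eq_sym | exists t1].
  by rewrite (bigD1 t) //= kt mul0r mulr0.
Qed.

Lemma SAdj_has_sdecomp (R : realType) (I : finType) (dl r : nat) (e : I)
    (C : tensor R I (dl + dl)) (v : I -> R) (lam : 'I_r -> R) (x : 'I_r -> I -> R)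
    (A : tensor R (option I) (dl + dl)) :
  sym_tensor C ->
  Cmod C (tpow v (dl + dl).-1) (fun k => \sum_(j < r) lam j * tpow (x j) (dl + dl) k) ->
  is_SAdj C (tpow v (dl + dl).-1) A -> has_sdecomp A (r + (dl + dl)).
Proof.
move=> symC HT HA.
have [u Hu] := Cmod_sym_normal_form symC (sym_tensor_sdecomp lam x) HT.
have [mu [s Hq]] := coef1_quadrature R dl.
rewrite (is_SAdj_unique e HA (is_SAdj_pencil Hu)).
exists (fun i => match split i with inl j => lam j | inr m => mu m end).
exists (fun i => match split i with
                 | inl j => oext (x j) 0
                 | inr m => oext (fun a => v a + s m * u a) (s m) end).
move=> k /=; rewrite [RHS]big_split_ord /=; congr (_ + _).
  by apply: eq_bigr => j _; rewrite split_lshift.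
rewrite -Hq ?size_prod_pencil_poly //; apply: eq_bigr => m _.
rewrite split_rshift horner_prod; congr (_ * _); apply: eq_bigr => t _.
by rewrite horner_pencil_poly.
Qed.

(** * The lower bound *)

Lemma prod_ord_if_lt (R : comNzRingType) (d n : nat) (a b : R) : (n <= d)%N ->
  \prod_(t < d) (if (t < n)%N then a else b) = a ^+ n * b ^+ (d - n).
Proof.
move=> nd; rewrite -(big_mkord xpredT (fun t : nat => if (t < n)%N then a else b)).
rewrite (big_cat_nat (n:=n)) //= (eq_big_nat _ _ (F2 := fun _ => a)); last first.
  by move=> i /andP [_ ->].
rewrite [X in _ * X](eq_big_nat _ _ (F2 := fun _ => b)); last first.
  by move=> i /andP [ni _]; rewrite ltnNge ni.
by rewrite !prodr_const_nat subn0.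
Qed.

Lemma SAdj_decomp_moment (R : realType) (I : finType) (d s : nat) (C : tensor R I d)
    (v : I -> R) (e : I) (A : tensor R (option I) d) (lam' : 'I_s -> R)
    (y : 'I_s -> option I -> R) :
  is_SAdj C (tpow v d.-1) A -> (forall k, A k = \sum_(i < s) lam' i * tpow (y i) d k) ->
  forall n, (n < d)%N ->
  \sum_(i < s) lam' i * (y i (Some e) ^+ n * y i None ^+ (d - n)) =
  if n == d.-1 then v e ^+ d.-1 else 0.
Proof.
move=> [_ A2 A3] Hdec n nd.
pose kn (t : 'I_d) := if (t < n)%N then Some e else None.
have <- : A kn = \sum_(i < s) lam' i * (y i (Some e) ^+ n * y i None ^+ (d - n)).
  rewrite Hdec; apply: eq_bigr => i _; rewrite -prod_ord_if_lt ?(ltnW nd) //.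
  by congr (_ * _); apply: eq_bigr => t _; rewrite /kn; case: ifP.
have [nd1 | nd1] := eqVneq n d.-1.
  have d1d : (d.-1 < d)%N by rewrite -nd1.
  have -> : kn = fun t => if t == Ordinal d1d then None else Some e.
    apply: functional_extensionality => t; rewrite /kn -val_eqE /= -nd1.
    have tn : (t <= n)%N by rewrite nd1 -ltnS prednK ?ltn_ord // (leq_ltn_trans _ nd).
    by rewrite ltn_neqAle tn andbT; case: eqP.
  by rewrite A2 /tpow /delete_at prodr_const card_ord.
have d2n : (n.+2 <= d)%N by rewrite ltn_neqAle nd andbT; apply: contra nd1 => /eqP <-.
apply: A3; apply/card_gt1P; exists (Ordinal nd), (Ordinal d2n).
by rewrite !inE /kn /= ltnn ltnNge leqnSn -val_eqE /= (ltn_eqF (ltnSn n)).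
Qed.

Lemma SAdj_decomp_card_None_ge (R : realType) (I : finType) (d s : nat) (C : tensor R I d)
    (v : I -> R) (e : I) (A : tensor R (option I) d) (lam' : 'I_s -> R)
    (y : 'I_s -> option I -> R) :
  v e != 0 -> is_SAdj C (tpow v d.-1) A ->
  (forall k, A k = \sum_(i < s) lam' i * tpow (y i) d k) ->
  (d <= #|[set i | y i None != 0%R]|)%N.
Proof.
move=> ve HA Hdec; apply: (card_support_ge_of_moments (z := v e ^+ d.-1)).
  by rewrite expf_neq0.
exact: SAdj_decomp_moment HA Hdec.
Qed.

Lemma SAdj_decomp_expand (R : realType) (I : finType) (d s : nat) (C : tensor R I d)
    (v : I -> R) (A : tensor R (option I) d) (lam' : 'I_s -> R)
    (y : 'I_s -> option I -> R) (g : 'I_d -> I -> R) (k : 'I_d -> I) :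
  is_SAdj C (tpow v d.-1) A ->
  (forall k, A k = \sum_(i < s) lam' i * tpow (y i) d k) ->
  \sum_(i < s) lam' i * \prod_(t < d) (y i (Some (k t)) - y i None * g t (k t)) =
  C k - \sum_(j < d) g j (k j) * tpow_skip v k j.
Proof.
move=> [A1 A2 A3] Hdec.
pose kJ (J : {set 'I_d}) t := if t \in J then None else Some (k t).
pose Phi (J : {set 'I_d}) := (\prod_(t in J) - g t (k t)) * A (kJ J).
transitivity (\sum_(J : {set 'I_d}) Phi J).
  under eq_bigr => i _ do rewrite (eq_bigr _ (fun t _ => addrC _ _)) bigA_distr mulr_sumr.
  rewrite exchange_big; apply: eq_bigr => J _; rewrite /Phi Hdec mulr_sumr.
  apply: eq_bigr => i _; rewrite mulrCA; congr (_ * _).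
  rewrite /tpow [in RHS]big_mkcond /= -big_split /=; apply: eq_bigr => t _; rewrite /kJ.
  by case: (t \in J); rewrite ?mul1r // mulrC mulNr.
have None_kJ J : [set t | kJ J t == None] = J.
  by apply/setP => t; rewrite inE /kJ; case: (t \in J).
rewrite sum_subsets_card_le1; last by move=> J J_gt1; rewrite /Phi A3 ?None_kJ ?mulr0.
have -> : Phi set0 = C k.
  rewrite /Phi big_set0 mul1r -A1; congr A; apply: functional_extensionality => t.
  by rewrite /kJ in_set0.
rewrite -sumrN; congr (_ + _); apply: eq_bigr => j _; rewrite /Phi big_set1.
have -> : kJ [set j] = fun t => if t == j then None else Some (k t).
  by apply: functional_extensionality => t; rewrite /kJ in_set1.
by rewrite A2 tpow_delete_at mulNr.
Qed.

Lemma SAdj_decomp_residual (R : realType) (I : finType) (d s : nat) (C : tensor R I d)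
    (v : I -> R) (A : tensor R (option I) d) (lam' : 'I_s -> R)
    (y : 'I_s -> option I -> R) (f : 'I_d -> 'I_s) :
  is_SAdj C (tpow v d.-1) A ->
  (forall k, A k = \sum_(i < s) lam' i * tpow (y i) d k) ->
  (forall t, y (f t) None != 0) ->
  exists (p : 'I_s -> 'I_d -> I -> R) (c : 'I_d -> I -> R), forall k,
    C k = \sum_(i | i \notin codom f) lam' i * \prod_(t < d) p i t (k t)
          + \sum_(j < d) c j (k j) * tpow_skip v k j.
Proof.
move=> HA Hdec f_None.
(* chosen so that the t-th factor of the summand f t vanishes *)
pose g t a := y (f t) (Some a) / y (f t) None.
exists (fun i t a => y i (Some a) - y i None * g t a), g => k.
rewrite -[C k](subrK (\sum_(j < d) g j (k j) * tpow_skip v k j)).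
rewrite -(SAdj_decomp_expand g k HA Hdec) (bigID (mem (codom f))) /= big1 ?add0r //.
move=> _ /codomP [t ->]; rewrite (bigD1 t) //= /g [_ * (_ / _)]mulrC divfK //.
by rewrite subrr mul0r mulr0.
Qed.

Lemma sdecomp_flattening_bound (R : realType) (I : finType) (dl r s : nat)
    (lam : 'I_r -> R) (x : 'I_r -> I -> R) (v : I -> R) (P : pred 'I_s) (w : 'I_s -> R)
    (p : 'I_s -> 'I_(dl + dl) -> I -> R) (h : 'I_(dl + dl) -> I -> R) :
  (forall j, lam j != 0) ->
  (forall (a : 'I_r -> R) (b : R),
      (forall k : 'I_dl -> I, \sum_(j < r) a j * tpow (x j) dl k + b * tpow v dl k = 0) ->
      (forall j, a j = 0) /\ b = 0) ->
  (forall k, \sum_(j < r) lam j * tpow (x j) (dl + dl) k =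
     \sum_(i | P i) w i * \prod_(t < dl + dl) p i t (k t)
     + \sum_(j < dl + dl) h j (k j) * tpow_skip v k j) ->
  (r <= #|P|)%N.
Proof.
move=> lam_neq0 indep Hk.
have tpow_ffun (u : I -> R) (k : 'I_dl -> I) : tpow u dl [ffun t => k t] = tpow u dl k.
  by apply: eq_bigr => t _; rewrite ffunE.
pose half (c : 'I_dl -> I) (sh : 'I_dl -> 'I_(dl + dl)) :=
  \sum_(j < dl) h (sh j) (c j) * tpow_skip v c j.
apply: (@flattening_rank_bound R {ffun 'I_dl -> I} r s lam (fun j c => tpow (x j) dl c)
  (fun c => tpow v dl c) (fun c => - half c (@lshift dl dl))
  (fun c => - half c (@rshift dl dl)) P
  (fun i c => w i * \prod_(t < dl) p i (lshift dl t) (c t))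
  (fun i c => \prod_(t < dl) p i (rshift dl t) (c t)) lam_neq0).
  move=> a b Hab; apply: indep => k; have := Hab [ffun t => k t].
  by rewrite tpow_ffun; under eq_bigr do rewrite tpow_ffun.
move=> c1 c2; have := Hk (tcat c1 c2); under eq_bigr do rewrite tpow_tcat.
move=> ->; rewrite big_split_ord /= mulNr mulrN.
have -> : half c1 (@lshift dl dl) * tpow v dl c2 =
    \sum_(i < dl) h (lshift dl i) (tcat c1 c2 (lshift dl i)) *
                  tpow_skip v (tcat c1 c2) (lshift dl i).
  rewrite mulr_suml; apply: eq_bigr => i _.
  by rewrite tcat_lshift tpow_skip_tcat_lshift mulrA.
have -> : tpow v dl c1 * half c2 (@rshift dl dl) =
    \sum_(i < dl) h (rshift dl i) (tcat c1 c2 (rshift dl i)) *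
                  tpow_skip v (tcat c1 c2) (rshift dl i).
  rewrite mulr_sumr; apply: eq_bigr => i _.
  by rewrite tcat_rshift tpow_skip_tcat_rshift mulrCA.
rewrite -opprD addrK; apply: eq_bigr => i _.
by rewrite big_split_ord mulrA; congr (_ * _ * _); apply: eq_bigr => t _;
  rewrite ?tcat_lshift ?tcat_rshift.
Qed.

Lemma SAdj_decomp_lower_bound (R : realType) (I : finType) (dl r s : nat) (e : I)
    (C : tensor R I (dl + dl)) (v : I -> R) (lam : 'I_r -> R) (x : 'I_r -> I -> R)
    (A : tensor R (option I) (dl + dl)) :
  v e != 0 -> (forall j, lam j != 0) ->
  (forall (a : 'I_r -> R) (b : R),
      (forall k : 'I_dl -> I, \sum_(j < r) a j * tpow (x j) dl k + b * tpow v dl k = 0) ->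
      (forall j, a j = 0) /\ b = 0) ->
  Cmod C (tpow v (dl + dl).-1) (fun k => \sum_(j < r) lam j * tpow (x j) (dl + dl) k) ->
  is_SAdj C (tpow v (dl + dl).-1) A -> has_sdecomp A s -> (r + (dl + dl) <= s)%N.
Proof.
move=> ve lam_neq0 indep [c HT] HA [lam' [y Hdec]].
set n := (dl + dl)%N.
have nS := SAdj_decomp_card_None_ge ve HA Hdec.
set S := [set i | y i None != 0] in nS.
pose f (t : 'I_n) : 'I_s := enum_val (widen_ord nS t).
have f_inj : injective f.
  by move=> t t' /enum_val_inj /(congr1 val) /= /val_inj.
have f_None t : y (f t) None != 0 by have := enum_valP (widen_ord nS t); rewrite inE.
have [p [c' Hres]] := SAdj_decomp_residual HA Hdec f_None.
have card_P : (#|[pred i | i \notin codom f]| + n)%N = s.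
  rewrite -[X in _ = X](card_ord s) -(cardC (mem (codom f))) card_codom // card_ord addnC.
  by congr (_ + _); apply: eq_card.
rewrite -card_P leq_add2r; apply: (sdecomp_flattening_bound (w := lam') (p := p)
  (h := fun j a => c j a + c' j a) lam_neq0 indep) => k.
rewrite HT Hres -addrA; congr (_ + _); rewrite -big_split; apply: eq_bigr => j _ /=.
by rewrite tpow_delete_at mulrDl addrC.
Qed.

Lemma is_minsrk_coef_neq0 (R : realType) (I : finType) (n r : nat)
    (X : tensor R I n -> Prop) (lam : 'I_r -> R) (x : 'I_r -> I -> R) :
  X (fun k => \sum_(j < r) lam j * tpow (x j) n k) -> is_minsrk X r -> forall j, lam j != 0.
Proof.
move=> XT [_ min_r] j0; apply/eqP => lam_j0.
have : has_sdecomp (fun k => \sum_(j < r) lam j * tpow (x j) n k) r.-1.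
  exists (fun i => lam (lift j0 i)), (fun i => x (lift j0 i)) => k.
  by rewrite (bigD1_ord j0) //= lam_j0 mul0r add0r.
have r_gt0 : (0 < r)%N := leq_ltn_trans (leq0n _) (ltn_ord j0).
by move=> /(min_r _ XT (sym_tensor_sdecomp lam x)); rewrite leqNgt prednK ?leqnn.
Qed.

Theorem proposition3p19 (R : realType) (I : finType) (d delta : nat)
  (Hd : d = (2 * delta)%N) (Hdelta : (0 < delta)%N)
  (C : tensor R I d) (HC : sym_tensor C)
  (v : I -> R) (Hv : v <> (fun _ => 0))
  (r : nat) (lam : 'I_r -> R) (x : 'I_r -> I -> R)
  (HT : Cmod C (tpow v d.-1) (fun k => \sum_(j < r) lam j * tpow (x j) d k))
  (Hmin : is_minsrk (Cmod C (tpow v d.-1)) r)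
  (Hindep : forall (a : 'I_r -> R) (b : R),
      (forall k : 'I_delta -> I,
         \sum_(j < r) a j * tpow (x j) delta k + b * tpow v delta k = 0) ->
      (forall j, a j = 0) /\ b = 0) :
  forall A : tensor R (option I) d, is_SAdj C (tpow v d.-1) A ->
    is_srk A (r + d)%N.
Proof.
move=> A HA; have {Hd} Hd : d = (delta + delta)%N by rewrite Hd mul2n addnn.
subst d.
have [e ve] : exists e, v e != 0.
  apply/existsP; apply: contraT => /existsPn v0; case: Hv.
  by apply: functional_extensionality => a; apply/eqP; rewrite -[_ == _]negbK v0.
have lam_neq0 := is_minsrk_coef_neq0 HT Hmin.
split; first exact: (SAdj_has_sdecomp e HC HT HA).
by move=> s; apply: (SAdj_decomp_lower_bound (s := s) ve lam_neq0 Hindep HT HA).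
Qed.
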